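(* Let $\mathbf{A}\in\mathbb{R}^{n\times n}$ and $\mathbf{V}\in\mathbb{R}^{n\times r}$ with $r\le n$, and let $\mathbf{Q}_\perp\in\mathbb{R}^{n\times(n-r)}$ be the last $n-r$ columns of the orthogonal factor $\mathbf{Q}_{\rm full}$ of a full QR factorization $\mathbf{V}=\mathbf{Q}_{\rm full}\begin{bmatrix}\mathbf{R}\\\mathbf{0}\end{bmatrix}$. Then for every $k\ge r$ the polynomial $a(t)=e_k(\mathbf{A}+t\mathbf{V}\mathbf{V}^\top)$ has degree at most $r$, and its coefficient of $t^r$ equals \[\det(\mathbf{V}^\top\mathbf{V})\,e_{k-r}(\mathbf{Q}_\perp^\top\mathbf{A}\mathbf{Q}_\perp).\] In particular, for $k=n$, the coefficient of $t^r$ in $\det(\mathbf{A}+t\mathbf{V}\mathbf{V}^\top)$ equals $\det(\mathbf{V}^\top\mathbf{V})\det(\mathbf{Q}_\perp^\top\mathbf{A}\mathbf{Q}_\perp)=(-1)^r\det\begin{bmatrix}\mathbf{A}&\mathbf{V}\\\mathbf{V}^\top&0\end{bmatrix}$.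
   Context: For a square matrix $\mathbf{B}$ with eigenvalues $\lambda_1,\ldots,\lambda_m$, $e_k(\mathbf{B})=e_k(\lambda_1,\ldots,\lambda_m)$, where $e_k(\lambda_1,\ldots,\lambda_m)=\sum_{\#\mathcal{Y}=k}\prod_{i\in\mathcal{Y}}\lambda_i$ is the $k$-th elementary symmetric polynomial, with $e_0=1$; equivalently $e_k(\mathbf{B})$ is the sum of all $k\times k$ principal minors of $\mathbf{B}$. *)

From HB Require Import structures.
From mathcomp Require Import all_boot all_order all_algebra.
Set Implicit Arguments. Unset Strict Implicit. Unset Printing Implicit Defensive.
Import Order.TTheory GRing.Theory Num.Theory.
Local Open Scope ring_scope.

(* e_k(B) for a square matrix B over a commutative ring: the sum of all
   k x k principal minors of B (e_0 = 1; e_k = 0 for k > m). *)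
Definition ek (R : comRingType) (m : nat) (B : 'M[R]_m) (k : nat) : R :=
  \sum_(S : {set 'I_m} | #|S| == k)
     \det (\matrix_(i, j) B (@enum_val _ (mem S) i) (@enum_val _ (mem S) j)).

Lemma last_cols_subproof (n r : nat) (j : 'I_(n - r)) : (r + j < n)%N.
Proof. by have := ltn_ord j; rewrite ltn_subRL. Qed.

Definition last_cols (R : Type) (m n r : nat) (Q : 'M[R]_(m, n)) : 'M[R]_(m, n - r) :=
  \matrix_(i, j) Q i (Ordinal (last_cols_subproof j)).

(* [R; 0] : the r x r matrix Rm padded with n - r zero rows below *)
Definition pad_rows (R : pzRingType) (n r : nat) (Rm : 'M[R]_r) : 'M[R]_(n, r) :=
  \matrix_(i, j) (if insub (val i) is Some i' then Rm i' j else 0).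

Definition pencil (R : comRingType) (n r : nat) (A : 'M[R]_n) (V : 'M[R]_(n, r))
  : 'M[{poly R}]_n :=
  map_mx polyC A + 'X *: map_mx polyC (V *m V^T).

From HB Require Import structures.
From mathcomp Require Import all_boot all_order all_algebra perm zify.
Set Implicit Arguments. Unset Strict Implicit. Unset Printing Implicit Defensive.
Import Order.TTheory GRing.Theory Num.Theory.
Local Open Scope ring_scope.

(* Expanding the determinant row by row, det (U + t W) is the sum over row sets J of
   t^|J| times the determinant of U with the rows in J replaced by those of W. If W
   vanishes outside a set L of rows, only the J contained in L contribute, so the
   degree is at most |L| and the coefficient of t^|L| is the determinant of the mix
   along L. Applied to det (x I + M) this exhibits e_k(M) as a coefficient of the
   characteristic polynomial, so e_k is invariant under orthogonal conjugation.
   Conjugating by Qfull turns V V^T into [Rm Rm^T, 0; 0, 0]; the mix along the first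
   r rows is then block triangular, with determinant det (Rm Rm^T) times
   det (x I + Qperp^T A Qperp), whose coefficients are the e_(k-r). For the bordered
   matrix, [A, V; t V^T, -I] has determinant (-1)^r det (A + t V V^T) (Schur
   complement) and its t^r coefficient is the mix along its last r rows. *)

Definition row_mix (R : comNzRingType) m (J : {set 'I_m}) (W U : 'M[R]_m) : 'M[R]_m :=
  \matrix_(i, j) if i \in J then W i j else U i j.

Definition principal_minor (R : comNzRingType) m (M : 'M[R]_m) (J : {set 'I_m}) : 'M[R]_#|J| :=
  mxsub (@enum_val _ (mem J)) (@enum_val _ (mem J)) M.

Lemma ekE (R : comNzRingType) m (M : 'M[R]_m) k :
  ek M k = \sum_(J : {set 'I_m} | #|J| == k) \det (principal_minor M J).
Proof. by []. Qed.

Lemma det_addmx (R : comNzRingType) m (U W : 'M[R]_m) :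
  \det (U + W) = \sum_(J : {set 'I_m}) \det (row_mix J W U).
Proof.
rewrite /determinant.
transitivity (\sum_(s : 'S_m) \sum_(J : {set 'I_m})
    (-1) ^+ s * \prod_i (if i \in J then W i (s i) else U i (s i))).
  apply: eq_bigr => s _; rewrite -big_distrr /=; congr (_ * _).
  rewrite (eq_bigr (fun i => W i (s i) + U i (s i))) ?bigA_distr //.
  by move=> i _; rewrite !mxE addrC.
rewrite exchange_big /=; apply: eq_bigr => J _; apply: eq_bigr => s _.
by congr (_ * _); apply: eq_bigr => i _; rewrite !mxE; case: ifP.
Qed.

Lemma det_scale_rows (R : comNzRingType) m (c : 'I_m -> R) (M : 'M[R]_m) :
  \det (\matrix_(i, j) (c i * M i j)) = (\prod_i c i) * \det M.
Proof.
have -> : \matrix_(i, j) (c i * M i j) = diag_mx (\row_i c i) *m M.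
  by rewrite mul_diag_mx; apply/matrixP => i j; rewrite !mxE.
by rewrite det_mulmx det_diag; congr (_ * _); apply: eq_bigr => i _; rewrite mxE.
Qed.

Lemma det_add_scalemx (R : comNzRingType) m (t : R) (U W : 'M[R]_m) :
  \det (U + t *: W) = \sum_(J : {set 'I_m}) t ^+ #|J| * \det (row_mix J W U).
Proof.
rewrite det_addmx; apply: eq_bigr => J _.
have -> : row_mix J (t *: W) U =
           \matrix_(i, j) ((if i \in J then t else 1) * row_mix J W U i j).
  by apply/matrixP => i j; rewrite !mxE; case: ifP; rewrite ?mul1r.
by rewrite det_scale_rows -big_mkcond /= prodr_const.
Qed.

Lemma det_row0 (R : comNzRingType) m (M : 'M[R]_m) i0 : (forall j, M i0 j = 0) -> \det M = 0.
Proof. by move=> M0; rewrite (expand_det_row _ i0) big1 // => j _; rewrite M0 mul0r. Qed.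

Lemma det_mxsub_inj (R : comNzRingType) p m (f : 'I_p -> 'I_m) (M : 'M[R]_m) :
  p = m -> injective f -> \det (mxsub f f M) = \det M.
Proof.
move=> pm finj; subst p; pose s := perm finj.
have -> : mxsub f f M = row_perm s (col_perm s M) by apply/matrixP => i j; rewrite !mxE !permE.
rewrite row_permE col_permE !det_mulmx !det_perm odd_permV mulrCA -signr_addb addbb.
exact: mulr1.
Qed.

Lemma det_mxsub_lblock (R : comNzRingType) p q m
    (f : 'I_p -> 'I_m) (g : 'I_q -> 'I_m) (M : 'M[R]_m) :
  (p + q = m)%N -> injective f -> injective g -> (forall i j, f i != g j) ->
  (forall i j, M (f i) (g j) = 0) ->
  \det M = \det (mxsub f f M) * \det (mxsub g g M).
Proof.
move=> pqm finj ginj fg Mfg.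
pose h k := match split k with inl i => f i | inr j => g j end.
have hl i : h (lshift q i) = f i by rewrite /h (unsplitK (inl _ i)).
have hr j : h (rshift p j) = g j by rewrite /h (unsplitK (inr _ j)).
have hinj : injective h.
  move=> k1 k2; rewrite -[k1]splitK -[k2]splitK.
  case: (split k1) => x1; case: (split k2) => x2 /=; rewrite ?hl ?hr => e.
  - by rewrite (finj _ _ e).
  - by move: (fg x1 x2); rewrite e eqxx.
  - by move: (fg x2 x1); rewrite e eqxx.
  - by rewrite (ginj _ _ e).
rewrite -(det_mxsub_inj M pqm hinj) -[mxsub h h M]submxK.
have -> : ursubmx (mxsub h h M) = 0 by apply/matrixP => i j; rewrite !mxE hl hr Mfg.
rewrite det_lblock; congr (_ * _); congr (\det _).
  by apply/matrixP => i j; rewrite !mxE !hl.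
by apply/matrixP => i j; rewrite !mxE !hr.
Qed.

Lemma det_row_mix1 (R : comNzRingType) m (J : {set 'I_m}) (M : 'M[R]_m) :
  \det (row_mix J 1%:M M) = \det (principal_minor M (~: J)).
Proof.
pose f := @enum_val _ (mem J); pose g := @enum_val _ (mem (~: J)).
have Jc : (#|J| + #|~: J| = m)%N by rewrite cardsC card_ord.
have inJ i : f i \in J := enum_valP i.
have inJc j : g j \notin J by have := enum_valP j; rewrite inE.
have fg i j : f i != g j by apply: contraNneq (inJc j) => <-.
have off_block i j : row_mix J 1%:M M (f i) (g j) = 0 by rewrite !mxE inJ (negbTE (fg i j)).
rewrite (det_mxsub_lblock Jc enum_val_inj enum_val_inj fg off_block).
have -> : mxsub f f (row_mix J 1%:M M) = 1%:M.
  by apply/matrixP => i j; rewrite !mxE inJ (inj_eq enum_val_inj).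
by rewrite det1 mul1r; congr (\det _); apply/matrixP => i j; rewrite !mxE (negbTE (inJc i)).
Qed.

Lemma det_char_expansion (R : comNzRingType) m (M : 'M[R]_m) :
  \det ('X%:M + map_mx polyC M) =
  \sum_(J : {set 'I_m}) 'X^(m - #|J|) * (\det (principal_minor M J))%:P.
Proof.
rewrite addrC -scalemx1 det_add_scalemx (reindex_inj (@setC_inj _)) /=.
apply: eq_bigr => J _; rewrite det_row_mix1 setCK /principal_minor -map_mxsub det_map_mx.
by have := cardsC J; rewrite card_ord => /(canRL (addKn _)) <-.
Qed.

Lemma widen_ord_inj m p (mp : (m <= p)%N) : injective (widen_ord mp).
Proof. by move=> i j /(congr1 val) /= /val_inj. Qed.

Lemma card_set_ltn m r : (r <= m)%N -> #|[set i : 'I_m | (i < r)%N]| = r.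
Proof.
move=> rm; have -> : [set i : 'I_m | (i < r)%N] = [set widen_ord rm i | i in 'I_r].
  apply/setP => i; rewrite inE; apply/idP/imsetP => [ir | [j _ -> /=]].
    by exists (Ordinal ir) => //; apply: val_inj.
  exact: ltn_ord.
by rewrite card_imset ?card_ord //; apply: widen_ord_inj.
Qed.

Lemma card_setC_ltn m r : (r <= m)%N -> #|~: [set i : 'I_m | (i < r)%N]| = (m - r)%N.
Proof.
move=> rm; have := cardsC [set i : 'I_m | (i < r)%N].
by rewrite card_set_ltn // card_ord => /(canRL (addKn _)).
Qed.

Lemma ek_small (R : comNzRingType) m (M : 'M[R]_m) k : (m < k)%N -> ek M k = 0.
Proof.
move=> mk; rewrite ekE big1 // => J /eqP cardJ.
suff : (k <= m)%N by rewrite leqNgt mk.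
by rewrite -cardJ -[X in (_ <= X)%N]card_ord max_card.
Qed.

Lemma ek_det (R : comNzRingType) m (M : 'M[R]_m) : ek M m = \det M.
Proof.
have cardT : #|[set: 'I_m]| = m by rewrite cardsT card_ord.
rewrite ekE (big_pred1 setT); first exact: det_mxsub_inj cardT enum_val_inj.
move=> J /=; apply/eqP/eqP => [cardJ | ->]; last exact: cardT.
by apply/eqP; rewrite eqEcard subsetT cardT cardJ leqnn.
Qed.

Lemma ek_coef_char (R : comNzRingType) m (M : 'M[R]_m) k : (k <= m)%N ->
  ek M k = (\det ('X%:M + map_mx polyC M))`_(m - k).
Proof.
move=> km; rewrite det_char_expansion coef_sum ekE big_mkcond /=.
apply: eq_bigr => J _; rewrite mulrC coefCM coefXn.
have cardJ : (#|J| <= m)%N by rewrite -[X in (_ <= X)%N]card_ord max_card.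
have -> : (m - k == m - #|J|)%N = (#|J| == k) by apply/eqP/eqP; lia.
by case: eqP; rewrite ?mulr1 ?mulr0.
Qed.

Lemma ek_orthogonal_conj (R : comNzRingType) m (U M : 'M[R]_m) k :
  U *m U^T = 1%:M -> ek (U *m M *m U^T) k = ek M k.
Proof.
move=> UUt; have [km | mk] := leqP k m; last by rewrite !ek_small.
rewrite !ek_coef_char //; congr (_`_ _).
set Up := map_mx polyC U.
have UpUpt : Up *m Up^T = 1%:M by rewrite /Up map_trmx -map_mxM UUt map_mx1.
have -> : 'X%:M + map_mx polyC (U *m M *m U^T) = Up *m ('X%:M + map_mx polyC M) *m Up^T.
  rewrite mulmxDr mulmxDl.
  have -> : Up *m 'X%:M *m Up^T = 'X%:M by rewrite scalar_mxC -mulmxA UpUpt mulmx1.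
  by rewrite !map_mxM /Up map_trmx.
by rewrite !det_mulmx mulrAC -det_mulmx UpUpt det1 mul1r.
Qed.

Lemma coef_det_pencil (R : comNzRingType) m (L : {set 'I_m}) (U W : 'M[R]_m) j :
  (forall i k, i \notin L -> W i k = 0) -> (#|L| <= j)%N ->
  (\det (map_mx polyC U + 'X *: map_mx polyC W))`_j =
    if j == #|L| then \det (row_mix L W U) else 0.
Proof.
move=> W0 Lj; rewrite det_add_scalemx coef_sum.
have row_mixC J : row_mix J (map_mx polyC W) (map_mx polyC U) = map_mx polyC (row_mix J W U).
  by apply/matrixP => i k; rewrite !mxE; case: ifP.
under eq_bigr => J _ do rewrite row_mixC det_map_mx mulrC coefCM coefXn.
rewrite (bigD1 L) //= big1 ?addr0; first by case: eqP; rewrite ?mulr1 ?mulr0.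
move=> J JL; have [jJ | _] := eqVneq j #|J|; last by rewrite mulr0.
have /subsetPn [i iJ iL] : ~~ (J \subset L).
  by apply: contra JL => JsubL; rewrite eqEcard JsubL -jJ.
by rewrite (@det_row0 _ _ _ i) ?mul0r // => k; rewrite mxE iJ W0.
Qed.

(* swapXY makes the pencil parameter the outer variable, as coef_det_pencil requires. *)
Lemma coef_ek_pencil (R : comNzRingType) n (B W : 'M[R]_n) k j : (k <= n)%N ->
  (ek (map_mx polyC B + 'X *: map_mx polyC W) k)`_j =
  (\det (map_mx polyC ('X%:M + map_mx polyC B) + 'X *: map_mx polyC (map_mx polyC W)))
    `_j`_(n - k).
Proof.
move=> kn; rewrite ek_coef_char // -coef_swapXY -det_map_mx.
apply: (congr1 (fun p : {poly {poly R}} => p`_j`_(n - k))); congr (\det _).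
apply/matrixP => a b; rewrite !mxE !rmorphD rmorphMn /= swapXY_X !swapXY_polyC !map_polyC.
by rewrite rmorphM /= map_polyX map_polyC rmorphMn addrA.
Qed.

Section PaddedPencil.
Variables (R : comNzRingType) (n r : nat) (Rm : 'M[R]_r).
Hypothesis rn : (r <= n)%N.

Definition tail_ord (j : 'I_(n - r)) : 'I_n := Ordinal (last_cols_subproof j).

Lemma tail_ord_inj : injective tail_ord.
Proof. by move=> i j /(congr1 val) /addnI /val_inj. Qed.

Lemma last_colsE m (Q : 'M[R]_(m, n)) : last_cols r Q = colsub tail_ord Q.
Proof. by []. Qed.

Lemma pad_rows_ge (i : 'I_n) l : (r <= i)%N -> pad_rows n Rm i l = 0.
Proof. by move=> ri; rewrite mxE; case: insubP => // j; rewrite ltnNge ri. Qed.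

Lemma pad_rows_widen i l : pad_rows n Rm (widen_ord rn i) l = Rm i l.
Proof.
rewrite mxE; case: insubP => [j _ ij | ]; last by rewrite /= ltn_ord.
by congr (Rm _ _); apply: val_inj.
Qed.

Lemma rowsub_pad_rows : rowsub (widen_ord rn) (pad_rows n Rm) = Rm.
Proof. by apply/matrixP => i l; rewrite mxE pad_rows_widen. Qed.

Lemma tr_pad_rows_mul : (pad_rows n Rm)^T *m pad_rows n Rm = Rm^T *m Rm.
Proof.
set P := pad_rows n Rm; apply/matrixP => i j.
rewrite !mxE (bigID (fun l : 'I_n => (l < r)%N)) /=.
rewrite [X in _ + X]big1 ?addr0 => [|l]; last first.
  by rewrite -leqNgt => rl; rewrite [P^T _ _]mxE pad_rows_ge ?mul0r.
rewrite (big_ord_narrow rn); apply: eq_bigr => l _.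
by rewrite [P^T _ _]mxE [Rm^T _ _]mxE !pad_rows_widen.
Qed.

Lemma ek_pencil_pad_rows (B : 'M[R]_n) k : (r <= k)%N ->
  (size (ek (pencil B (pad_rows n Rm)) k) <= r.+1)%N /\
  (ek (pencil B (pad_rows n Rm)) k)`_r =
    \det (Rm *m Rm^T) * ek (mxsub tail_ord tail_ord B) (k - r).
Proof.
move=> rk; set P := pad_rows n Rm.
have [kn | nk] := leqP k n; last first.
  by rewrite !ek_small ?mulr0 ?size_poly0 ?coef0 //; lia.
set U := 'X%:M + map_mx polyC B.
set W := map_mx polyC (P *m P^T) : 'M[{poly R}]_n.
set L := [set i : 'I_n | (i < r)%N].
have W0 (i j : 'I_n) : (r <= i)%N || (r <= j)%N -> W i j = 0.
  move=> /orP rij; rewrite !mxE big1 // => l _; rewrite [P^T _ _]mxE.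
  case: rij => [ri | rj]; first by rewrite (pad_rows_ge _ ri) mul0r.
  by rewrite (pad_rows_ge _ rj) mulr0.
have coefE j : (r <= j)%N ->
    (ek (pencil B P) k)`_j = (if j == r then \det (row_mix L W U) else 0)`_(n - k).
  move=> rj; rewrite coef_ek_pencil // (coef_det_pencil (L := L)) ?card_set_ltn //.
  by move=> i l; rewrite inE -leqNgt => ri; rewrite W0 ?ri.
split.
  by apply/leq_sizeP => j rj; rewrite coefE ?(ltnW rj) // gtn_eqF // coef0.
rewrite coefE // eqxx.
have split_n : (r + (n - r) = n)%N by rewrite subnKC.
have head_tail i j : widen_ord rn i != tail_ord j.
  by apply/eqP => /(congr1 val) /= e; have := ltn_ord i; rewrite e ltnNge leq_addr.
have off_block i j : row_mix L W U (widen_ord rn i) (tail_ord j) = 0.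
  by rewrite mxE inE /= ltn_ord W0 //= leq_addr orbT.
rewrite (det_mxsub_lblock split_n (@widen_ord_inj _ _ rn) tail_ord_inj head_tail off_block).
have -> : mxsub (widen_ord rn) (widen_ord rn) (row_mix L W U) = map_mx polyC (Rm *m Rm^T).
  rewrite -rowsub_pad_rows trmx_mxsub -mxsub_mul map_mxsub.
  by apply/matrixP => i j; rewrite !mxE inE /= ltn_ord.
have -> : mxsub tail_ord tail_ord (row_mix L W U) =
           'X%:M + map_mx polyC (mxsub tail_ord tail_ord B).
  by apply/matrixP => i j; rewrite !mxE inE ltnNge leq_addr /= (inj_eq tail_ord_inj).
have -> : (n - k = (n - r) - (k - r))%N by lia.
by rewrite det_map_mx coefCM -ek_coef_char //; lia.
Qed.
End PaddedPencil.

Lemma pencil_conj (R : comNzRingType) n r (Q B : 'M[R]_n) (P : 'M[R]_(n, r)) :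
  pencil (Q *m B *m Q^T) (Q *m P) = map_mx polyC Q *m pencil B P *m (map_mx polyC Q)^T.
Proof.
rewrite /pencil mulmxDr mulmxDl -scalemxAr -scalemxAl map_trmx -!map_mxM.
by rewrite trmx_mul !mulmxA.
Qed.

Lemma coef_det_pencil_bordered (R : comNzRingType) n r (A : 'M[R]_n) (V : 'M[R]_(n, r)) :
  (\det (pencil A V))`_r = (-1) ^+ r * \det (block_mx A V V^T 0).
Proof.
pose U := block_mx A V 0 (-1)%:M : 'M[R]_(n + r).
pose W := block_mx 0 0 V^T 0 : 'M[R]_(n + r).
pose G := map_mx polyC U + 'X *: map_mx polyC W.
pose L := ~: [set i : 'I_(n + r) | (i < n)%N].
have detG : \det G = (-1) ^+ r * \det (pencil A V).
  have GE : G = block_mx (map_mx polyC A) (map_mx polyC V) ('X *: map_mx polyC V^T) (-1)%:M.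
    rewrite /G /U /W !map_block_mx scale_block_mx add_block_mx !map_mx0 !scaler0 !addr0 add0r.
    by rewrite map_scalar_mx /= rmorphN1.
  have : G *m block_mx 1%:M 0 ('X *: map_mx polyC V^T) 1%:M =
         block_mx (pencil A V) (map_mx polyC V) 0 (-1)%:M.
    rewrite GE mulmx_block !mulmx1 !mulmx0 !add0r mul_scalar_mx scaleN1r addrN.
    by rewrite /pencil -scalemxAr map_mxM.
  move/(congr1 determinant); rewrite det_mulmx det_lblock !det1 !mulr1 det_ublock det_scalar.
  by move=> ->; rewrite mulrC.
have W0 i j : i \notin L -> W i j = 0.
  rewrite -[i]splitK; case: (split i) => i'; rewrite !inE negbK /=.
    by move=> _; rewrite -[j]splitK; case: (split j) => j'; rewrite ?block_mxEul ?block_mxEur mxE.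
  by rewrite ltnNge leq_addr.
have -> : \det (pencil A V) = (-1) ^+ r * \det G.
  by rewrite detG mulrA -exprD -signr_odd oddD addbb mul1r.
have -> : (-1) ^+ r = ((-1) ^+ r)%:P :> {poly R} by rewrite rmorphXn rmorphN1.
have cardL : #|L| = r by rewrite card_setC_ltn ?leq_addr // addKn.
rewrite coefCM -[X in _`_X]cardL (coef_det_pencil (L := L)) // eqxx; congr (_ * \det _).
apply/matrixP => i j; rewrite -[i]splitK -[j]splitK.
by case: (split i) => i'; case: (split j) => j';
  rewrite mxE !inE /= ?ltn_ord ?ltnNge ?leq_addr /= /U /W
    ?block_mxEul ?block_mxEur ?block_mxEdl ?block_mxEdr.
Qed.

Theorem lemma3p10 (R : realFieldType) (n r : nat) (A : 'M[R]_n) (V : 'M[R]_(n, r))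
  (Qfull : 'M[R]_n) (Rm : 'M[R]_r) :
  (r <= n)%N ->
  Qfull^T *m Qfull = 1%:M ->
  is_trig_mx Rm^T ->
  V = Qfull *m pad_rows n Rm ->
  let Qperp := last_cols r Qfull in
  (forall k : nat, (r <= k)%N ->
     (size (ek (pencil A V) k) <= r.+1)%N /\
     (ek (pencil A V) k)`_r = \det (V^T *m V) * ek (Qperp^T *m A *m Qperp) (k - r))
  /\
  (\det (pencil A V))`_r = \det (V^T *m V) * \det (Qperp^T *m A *m Qperp)
  /\
  \det (V^T *m V) * \det (Qperp^T *m A *m Qperp)
    = (-1) ^+ r * \det (block_mx A V V^T (0 : 'M[R]_r)).
Proof.
move=> rn QtQ _ VE Qperp.
have QQt : Qfull *m Qfull^T = 1%:M := mulmx1C QtQ.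
set B := Qfull^T *m A *m Qfull.
have pencilE :
    pencil A V = map_mx polyC Qfull *m pencil B (pad_rows n Rm) *m (map_mx polyC Qfull)^T.
  by rewrite -pencil_conj VE /B !mulmxA QQt mul1mx -mulmxA QQt mulmx1.
have detVtV : \det (V^T *m V) = \det (Rm *m Rm^T).
  rewrite VE trmx_mul -mulmxA (mulmxA Qfull^T) QtQ mul1mx tr_pad_rows_mul //.
  by rewrite !det_mulmx det_tr mulrC.
have QperpE : Qperp^T *m A *m Qperp = mxsub (@tail_ord n r) (@tail_ord n r) B.
  by rewrite /Qperp last_colsE trmx_mxsub /B mxsub_mul -mul_rowsub_mx.
have ek_coef_r k : (r <= k)%N ->
    (size (ek (pencil A V) k) <= r.+1)%N /\
    (ek (pencil A V) k)`_r = \det (V^T *m V) * ek (Qperp^T *m A *m Qperp) (k - r).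
  rewrite pencilE ek_orthogonal_conj ?detVtV ?QperpE; first exact: ek_pencil_pad_rows.
  by rewrite map_trmx -map_mxM QQt map_mx1.
have det_coef_r : (\det (pencil A V))`_r = \det (V^T *m V) * \det (Qperp^T *m A *m Qperp).
  by have [_] := ek_coef_r n rn; rewrite !ek_det.
split; first exact: ek_coef_r.
split; first exact: det_coef_r.
by rewrite -det_coef_r coef_det_pencil_bordered.
Qed.
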